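(* Let $T=\{t_1,\ldots,t_N\}$ be documents, each containing at most $L$ distinct words from a dictionary $\{w_1,\ldots,w_D\}$, and let $\#(w)$ denote the number of documents containing word $w$. Let $h_1,\ldots,h_k$ be hash functions such that the values $h_j(t)$, over all $j$ and all documents $t$, are independent and uniformly distributed on $[0,1]$. For a word $w$ and hash function $h$, let $g(w)=\min_{t\,:\,w\in t}h(t)$ (the MinHash of $w$ under $h$). Consider the mapper MinHashSampleMap which, for each document $t$, each word $w$ in $t$, and each $j=1,\ldots,k$, emits $((w,j)\to h_j(t))$ if and only if $h_j(t)\le\frac{c\log(Dk)}{\#(w)}$, with $c=3$. Then with probability at least $1-\frac{1}{(Dk)^2}$, for all words $w$ and all hash functions $h\in\{h_1,\ldots,h_k\}$, MinHashSampleMap emits the hash value of the document that realizes $g(w)$.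
   Context: $\log$ denotes the natural logarithm. *)

From HB Require Import structures.
From mathcomp Require Import all_boot all_order all_algebra.
From mathcomp Require Import all_classical all_reals all_analysis.
Set Implicit Arguments. Unset Strict Implicit. Unset Printing Implicit Defensive.
Import Order.TTheory GRing.Theory Num.Theory.
Local Open Scope classical_set_scope.
Local Open Scope ring_scope.

(** Mutual independence of a finite family of real random variables:
    the joint law is the product of the marginals on all measurable boxes
    (taking [B i = setT] covers every subfamily). *)
Definition mutually_independent_RV {d} {T : measurableType d} {R : realType}
  (P : probability T R) (I : finType) (X : I -> T -> R) : Prop :=
  forall B : I -> set R, (forall i, measurable (B i)) ->
    P (\bigcap_(i in [set: I]) (X i @^-1` B i)) =
    (\prod_(i : I) P (X i @^-1` B i))%E.

Definition uniform01_RV {d} {T : measurableType d} {R : realType}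
  (P : probability T R) (X : T -> R) : Prop :=
  forall B : set R, measurable B ->
    P (X @^-1` B) = (@lebesgue_measure R) (B `&` `[0, 1]).

Definition ndocs (N D : nat) (docs : 'I_N -> {set 'I_D}) (w : 'I_D) : nat :=
  #|[set t : 'I_N | w \in docs t]|.

Definition minhash_sample_emits (R : realType) (N D k : nat)
  (docs : 'I_N -> {set 'I_D}) (h : 'I_k -> 'I_N -> R)
  (w : 'I_D) (j : 'I_k) (t : 'I_N) : Prop :=
  w \in docs t /\
  h j t <= 3 * ln ((D * k)%:R : R) / (ndocs docs w)%:R.

Definition realizes_minhash (R : realType) (N D k : nat)
  (docs : 'I_N -> {set 'I_D}) (h : 'I_k -> 'I_N -> R)
  (w : 'I_D) (j : 'I_k) (t : 'I_N) : Prop :=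
  w \in docs t /\ forall t' : 'I_N, w \in docs t' -> h j t <= h j t'.

From HB Require Import structures.
From mathcomp Require Import all_boot all_order all_algebra.
From mathcomp Require Import all_classical all_reals all_analysis.
From mathcomp Require Import ring.
Import Order.TTheory GRing.Theory Num.Theory.
Local Open Scope classical_set_scope.
Local Open Scope ring_scope.

(* Fix a word w and a hash h_j, and let a = 3 log(Dk) / #(w).  The document
   realizing the MinHash of w fails to be emitted only if every document
   containing w hashes above a.  By independence and uniformity this happens
   with probability (1 - a)^#(w) <= exp(-a #(w)) = (Dk)^-3, and a union bound
   over the Dk pairs (w, j) gives the failure probability (Dk)^-2. *)

Section independent_uniform.
Context {d} {T : measurableType d} {R : realType} {P : probability T R}.

Lemma uniform01_RV_gt (X : T -> R) (a : R) : uniform01_RV P X -> 0 <= a ->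
  P (X @^-1` `]a, +oo[) = (Num.max (1 - a) 0)%:E.
Proof.
move=> hX a0; rewrite hX; last exact: measurable_itv.
have -> : `]a, +oo[ `&` `[0, 1] = [set` `]a, 1]] :> set R.
  apply/seteqP; split => x /=; rewrite !in_itv /= ?andbT.
    by move=> [ax /andP[_ ->]]; rewrite ax.
  move=> /andP[ax x1]; split => //; apply/andP; split => //.
  exact: le_trans a0 (ltW ax).
rewrite lebesgue_measure_itv /= lte_fin.
case: ltP => a1; congr (_%:E).
  by rewrite max_l // subr_ge0 ltW.
by rewrite max_r // subr_le0.
Qed.

Lemma probability_bigcup_le {I : finType} {E : I -> set T} :
  (forall i, measurable (E i)) ->
  (P (\bigcup_i E i) <= \sum_i P (E i))%E.
Proof.
move=> mE; have -> : \bigcup_i E i = \big[setU/set0]_(i <- index_enum I) E i.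
  by rewrite -bigcup_seq; apply: eq_bigcupl; split => i // _; rewrite /= mem_index_enum.
elim: (index_enum I) => [|i r IH]; first by rewrite !big_nil measure0.
rewrite !big_cons; apply: le_trans (measureU2 _ _ _) _ => //.
  exact: bigsetU_measurable.
exact: leeD.
Qed.

Lemma all_gt_bigcap {I : finType} (S : {set I}) (a : R) (X : I -> T -> R) :
  [set x | forall i, i \in S -> a < X i x] =
  \bigcap_(i in [set: I]) X i @^-1` (if i \in S then `]a, +oo[%classic else setT).
Proof.
apply/seteqP; split => x /=.
  by move=> hx i _; case: ifP => // /hx; rewrite /= in_itv /= andbT.
by move=> hx i iS; have := hx i Logic.I; rewrite iS /= in_itv /= andbT.
Qed.

Lemma measurable_all_gt {I : finType} (S : {set I}) (a : R) (X : I -> {RV P >-> R}) :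
  measurable [set x | forall i, i \in S -> a < X i x].
Proof.
rewrite all_gt_bigcap; apply: fin_bigcap_measurable; first exact: finite_finset.
by move=> i _; apply: measurable_funPTI; case: ifP.
Qed.

Lemma independent_uniform01_all_gt {I : finType} (S : {set I}) (a : R) (X : I -> T -> R) :
  mutually_independent_RV P X -> (forall i, uniform01_RV P (X i)) -> 0 <= a ->
  (P [set x | forall i, i \in S -> (a < X i x)%R] <= (expR (- a) ^+ #|S|)%:E)%E.
Proof.
move=> hind hunif a0; rewrite all_gt_bigcap hind; last by move=> i; case: ifP.
rewrite (eq_bigr (fun i => (if i \in S then Num.max (1 - a) 0 else 1)%:E)); last first.
  move=> i _; case: ifP => _; first exact: uniform01_RV_gt.
  by rewrite preimage_setT probability_setT.
rewrite prodEFin lee_fin -big_mkcond -prodr_const; apply: ler_prod => i _.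
rewrite le_max lexx orbT /= ge_max expR_ge0 andbT.
exact: expR_ge1Dx.
Qed.

End independent_uniform.

Lemma expR_ln_div_pow (R : realType) (c m n : nat) : (0 < m)%N -> (0 < n)%N ->
  expR (- (c%:R * ln (m%:R : R) / n%:R)) ^+ n = (m%:R ^+ c)^-1.
Proof.
move=> m0 n0; rewrite -expRM_natl.
have -> : n%:R * - (c%:R * ln (m%:R : R) / n%:R) = - (ln (m%:R : R) * c%:R).
  by field; rewrite pnatr_eq0 -lt0n.
by rewrite expRN expRM_natr lnK // posrE ltr0n.
Qed.

Lemma minimizers_le_iff {R : realType} {I : finType} (S : {set I}) (f : I -> R) (a : R) :
  (forall t, t \in S -> (forall t', t' \in S -> f t <= f t') -> f t <= a) <->
  ~ ((0 < #|S|)%N /\ forall t, t \in S -> a < f t).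
Proof.
split.
  move=> hmin [/card_gt0P [t0 t0S] hgt].
  have [tm tmS tm_min] := @arg_minP _ R I t0 (mem S) f t0S.
  by have := hmin tm tmS tm_min; rewrite leNgt hgt.
move=> nomin t tS t_min; rewrite leNgt; apply/negP => a_lt; apply: nomin.
split; first by apply/card_gt0P; exists t.
by move=> t' t'S; exact: lt_le_trans a_lt (t_min _ t'S).
Qed.

Section minhash.
Context {d} {T : measurableType d} {R : realType} {P : probability T R} {N D k : nat}.
Variables (docs : 'I_N -> {set 'I_D}) (H : 'I_k -> 'I_N -> {RV P >-> R}).
Hypothesis hind : mutually_independent_RV P (fun jt : 'I_k * 'I_N => (H jt.1 jt.2 : T -> R)).
Hypothesis hunif : forall j t, uniform01_RV P (H j t).

Definition docs_with (w : 'I_D) : {set 'I_N} := [set t | w \in docs t]%SET.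

Lemma card_docs_with w : #|docs_with w| = ndocs docs w.
Proof. by apply: eq_card => t; rewrite !inE; apply/idP/asboolP. Qed.

Definition minhash_threshold (w : 'I_D) : R := 3 * ln ((D * k)%:R : R) / (ndocs docs w)%:R.

(* Words occurring in no document are excluded explicitly: for them the
   universal condition holds vacuously. *)
Definition minhash_miss (w : 'I_D) (j : 'I_k) : set T :=
  [set x | (0 < ndocs docs w)%N /\ forall t, t \in docs_with w -> minhash_threshold w < H j t x].

Lemma emits_minhash_iff w j x :
  (forall t, realizes_minhash docs (fun j t => H j t x) w j t ->
             minhash_sample_emits docs (fun j t => H j t x) w j t) <->
  ~ minhash_miss w j x.
Proof.
rewrite /minhash_miss /= -card_docs_with.
apply: (iff_trans _ (minimizers_le_iff _ (fun t => H j t x) _)).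
split=> [emits t | le_thr t [wt t_min]].
  rewrite inE => wt t_min; apply: (emits t (conj wt _)).2 => t' wt'.
  by apply: t_min; rewrite inE.
split=> //; apply: le_thr; first by rewrite inE.
by move=> t'; rewrite inE; exact: t_min.
Qed.

Lemma minhash_missE w j : (0 < ndocs docs w)%N ->
  minhash_miss w j = [set x | forall i : 'I_k * 'I_N,
    i \in finset.setX [set j]%SET (docs_with w) -> minhash_threshold w < H i.1 i.2 x].
Proof.
move=> w_used; apply/seteqP; split => x /=.
  by move=> [_ miss] [j' t]; rewrite finset.in_setX inE /= => /andP[/eqP -> /miss].
by move=> miss; split=> // t wt; apply: (miss (j, t)); rewrite finset.in_setX inE eqxx.
Qed.

Lemma minhash_miss_unused w j : ndocs docs w = 0%N -> minhash_miss w j = set0.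
Proof. by move=> w_unused; rewrite -subset0 => x []; rewrite w_unused. Qed.

Lemma measurable_minhash_miss w j : measurable (minhash_miss w j).
Proof.
have [w_unused|w_used] := posnP (ndocs docs w).
  by rewrite minhash_miss_unused.
rewrite minhash_missE //.
exact: (measurable_all_gt _ _ (fun i : 'I_k * 'I_N => H i.1 i.2)).
Qed.

Lemma probability_minhash_miss w j :
  (P (minhash_miss w j) <= (((D * k)%:R ^+ 3)^-1)%:E)%E.
Proof.
have [w_unused|w_used] := posnP (ndocs docs w).
  by rewrite minhash_miss_unused // measure0 lee_fin invr_ge0 exprn_ge0.
have Dk_gt0 : (0 < D * k)%N.
  by rewrite muln_gt0 (leq_ltn_trans _ (ltn_ord w)) // (leq_ltn_trans _ (ltn_ord j)).
have thr_ge0 : 0 <= minhash_threshold w.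
  by rewrite divr_ge0 // mulr_ge0 // ln_ge0 // ler1n.
rewrite minhash_missE //.
apply: le_trans (independent_uniform01_all_gt _ _ _ hind (fun i => hunif i.1 i.2) thr_ge0) _.
by rewrite cardsX cards1 mul1n card_docs_with expR_ln_div_pow.
Qed.

Lemma minhash_emits_setE :
  [set x | forall w j t, realizes_minhash docs (fun j t => H j t x) w j t ->
                         minhash_sample_emits docs (fun j t => H j t x) w j t] =
  ~` \bigcup_(p : 'I_D * 'I_k) minhash_miss p.1 p.2.
Proof.
rewrite setC_bigcup; apply/seteqP; split => x /= emits.
  by move=> [w j] _; apply/emits_minhash_iff; exact: emits.
by move=> w j; apply/emits_minhash_iff; exact: (emits (w, j)).
Qed.

Lemma measurable_minhash_some_miss :
  measurable (\bigcup_(p : 'I_D * 'I_k) minhash_miss p.1 p.2).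
Proof.
apply: fin_bigcup_measurable; first exact: finite_finset.
by move=> p _; exact: measurable_minhash_miss.
Qed.

Lemma probability_minhash_some_miss :
  (P (\bigcup_(p : 'I_D * 'I_k) minhash_miss p.1 p.2) <=
   ((D * k)%:R * (((D * k)%:R : R) ^+ 3)^-1)%:E)%E.
Proof.
apply: le_trans (probability_bigcup_le (fun p => measurable_minhash_miss p.1 p.2)) _.
apply: (@le_trans _ _ (\sum_(p : 'I_D * 'I_k) ((((D * k)%:R : R) ^+ 3)^-1)%:E)%E).
  by apply: lee_sum => p _; exact: probability_minhash_miss.
by rewrite sumEFin lee_fin sumr_const card_prod !card_ord mulr_natl.
Qed.

End minhash.

Theorem theorem5 (d : measure_display) (T : measurableType d) (R : realType)
  (P : probability T R) (N D L k : nat)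
  (docs : 'I_N -> {set 'I_D})
  (hL : forall t : 'I_N, (#|docs t| <= L)%N)
  (H : 'I_k -> 'I_N -> {RV P >-> R})
  (hind : mutually_independent_RV P (fun jt : 'I_k * 'I_N => (H jt.1 jt.2 : T -> R)))
  (hunif : forall (j : 'I_k) (t : 'I_N), uniform01_RV P (H j t)) :
  (P [set x | forall (w : 'I_D) (j : 'I_k) (t : 'I_N),
        realizes_minhash docs (fun j t => H j t x) w j t ->
        minhash_sample_emits docs (fun j t => H j t x) w j t]
   >= (1 - (((D * k) ^ 2)%:R)^-1)%:E)%E.
Proof.
rewrite minhash_emits_setE probability_setC; last exact: measurable_minhash_some_miss.
have -> : (((D * k) ^ 2)%:R : R)^-1 = (D * k)%:R * (((D * k)%:R : R) ^+ 3)^-1.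
  rewrite natrX; case: (D * k)%N => [|m]; first by rewrite !expr0n /= invr0 mul0r.
  by field; exact: lt0r_neq0.
rewrite EFinB leeB //; exact: probability_minhash_some_miss hind hunif.
Qed.
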